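(* Fix $n$ and a probability vector $p\in\mathbb R^I$ with positive entries. If $\vartheta^n_p<0$, then the state process $X^n$ of the $n$-th system is transient under every work-conserving stationary Markov scheduling policy. If $\vartheta^n_p=0$, then $X^n$ is not positive recurrent under any work-conserving stationary Markov scheduling policy.
   Context: Network: $\mathcal I=\{1,\dots,I\}$, $\mathcal J=\{1,\dots,J\}$, edges $\mathcal E\subset\mathcal I\times\mathcal J$ with the bipartite graph $\mathcal G=(\mathcal I\cup\mathcal J,\mathcal E)$ a tree; $i\sim j$ iff $(i,j)\in\mathcal E$, $\mathcal J(i)=\{j:i\sim j\}$, $\mathcal I(j)=\{i:i\sim j\}$; $\mathbb R^{\mathcal G}$ (resp. $\mathbb Z^{\mathcal G}_+$) denotes arrays in $\mathbb R^{I\times J}$ (resp. with nonnegative integer entries) vanishing off $\mathcal E$. For each $n\in\mathbb N$: $\lambda^n_i>0$, $\mu^n_{ij}>0$, $N^n_j\in\mathbb N$, with $\lambda^n_i/n\to\lambda_i>0$, $N^n_j/n\to\nu_j>0$, $\mu^n_{ij}\to\mu_{ij}>0$, $\hat\lambda^n_i:=(\lambda^n_i-n\lambda_i)/\sqrt n$, $\hat\mu^n_{ij}:=\sqrt n(\mu^n_{ij}-\mu_{ij})$, $\hat\nu^n_j:=\sqrt n(N^n_j/n-\nu_j)$ convergent to real limits. Complete resource pooling: the LP ''minimize $\max_j\sum_i\xi_{ij}$ over nonnegative $\xi\in\mathbb R^{\mathcal G}$ subject to $\sum_j\mu_{ij}\nu_j\xi_{ij}=\lambda_i$ $\forall i$''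 has a unique solution $\xi^*$, with $\sum_i\xi^*_{ij}=1$ $\forall j$ and $\xi^*_{ij}>0$ for $i\sim j$; $z^*_{ij}:=\xi^*_{ij}\nu_j$; $\theta^n_j:=\hat\nu^n_j+\sum_{i\in\mathcal I(j)}(\hat\mu^n_{ij}/\mu^n_{ij})z^*_{ij}$. $\vartheta^n_p$: for a probability vector $p$ with positive entries, the (unique) optimal value of: maximize $\vartheta$ over $(\vartheta,\kappa)\in\mathbb R\times\mathbb R^{\mathcal G}$ subject to $\hat\lambda^n_i\le\sum_{j\in\mathcal J(i)}\mu^n_{ij}\kappa_{ij}-\vartheta p_i$ $\forall i$ and $\sum_{i\in\mathcal I(j)}\kappa_{ij}=\theta^n_j$ $\forall j$. The $n$-th system (no abandonment, infinite buffers): for $x\in\mathbb Z^I_+$ (numbers of customers of each class in system), the work-conserving action set is $\mathcal Z^n(x)=\{z\in\mathbb Z^{\mathcal G}_+: q_i\ge0,\ y_j\ge0,\ q_i\wedge y_j=0\ \forall(i,j)\in\mathcal E\}$, where $q_i=x_i-\sum_jz_{ij}$ and $y_j=N^n_j-\sum_iz_{ij}$. A work-conserving stationary Markov scheduling policy is a map $z:\mathbb Z^I_+\to\mathbb Z^{\mathcal G}_+$ with $z(x)\in\mathcal Z^n(x)$ for all $x$; under it, $X^n$ is the continuous-time Markov chain on $\mathbb Z^I_+$ with generator $\mathcal L^n_zf(x)=\sum_{i}\big(\lambda^n_i(f(x+e_i)-f(x))+\sum_{j\in\mathcal J(i)}\mu^n_{ij}z_{ij}(x)(f(x-e_i)-f(x))\big)$,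 $e_i$ the $i$-th unit vector. *)

From mathcomp Require Import all_boot all_order all_algebra.
From mathcomp Require Import all_classical all_reals all_analysis.
Set Implicit Arguments. Unset Strict Implicit. Unset Printing Implicit Defensive.
Import Order.TTheory GRing.Theory Num.Theory.
Local Open Scope ring_scope.
Local Open Scope classical_set_scope.

Definition vadj (I J : nat) (E : {set 'I_I * 'I_J}) : rel ('I_I + 'I_J) :=
  fun u v => match u, v with
             | inl i, inr j => (i, j) \in E
             | inr j, inl i => (i, j) \in E
             | _, _ => false
             end.

Definition is_tree (I J : nat) (E : {set 'I_I * 'I_J}) : Prop :=
  (forall u v, connect (vadj E) u v) /\
  (forall c : seq ('I_I + 'I_J), uniq c -> (3 <= size c)%N -> ~~ cycle (vadj E) c).

Definition crp_feasible (R : realType) (I J : nat) (E : {set 'I_I * 'I_J})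
  (lamL : 'I_I -> R) (muL : 'I_I -> 'I_J -> R) (nuL : 'I_J -> R)
  (xi : 'I_I -> 'I_J -> R) : Prop :=
  (forall i j, (i, j) \notin E -> xi i j = 0) /\
  (forall i j, 0 <= xi i j) /\
  (forall i, \sum_(j | (i, j) \in E) muL i j * nuL j * xi i j = lamL i).

Definition crp_obj (R : realType) (I J : nat) (E : {set 'I_I * 'I_J})
  (xi : 'I_I -> 'I_J -> R) : R :=
  \big[Num.max/0]_(j < J) \sum_(i | (i, j) \in E) xi i j.

Definition CRP (R : realType) (I J : nat) (E : {set 'I_I * 'I_J})
  (lamL : 'I_I -> R) (muL : 'I_I -> 'I_J -> R) (nuL : 'I_J -> R)
  (xi : 'I_I -> 'I_J -> R) : Prop :=
  [/\ crp_feasible E lamL muL nuL xi,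
      (forall xi', crp_feasible E lamL muL nuL xi' -> crp_obj E xi <= crp_obj E xi'),
      (forall xi', crp_feasible E lamL muL nuL xi' -> crp_obj E xi' <= crp_obj E xi ->
                   forall i j, xi' i j = xi i j),
      (forall j, \sum_(i | (i, j) \in E) xi i j = 1) &
      (forall i j, (i, j) \in E -> 0 < xi i j)].

Definition lamhat (R : realType) (I : nat) (lam : nat -> 'I_I -> R) (lamL : 'I_I -> R)
  (m : nat) (i : 'I_I) : R := (lam m i - m%:R * lamL i) / Num.sqrt (m%:R).

Definition muhat (R : realType) (I J : nat) (mu : nat -> 'I_I -> 'I_J -> R)
  (muL : 'I_I -> 'I_J -> R) (m : nat) (i : 'I_I) (j : 'I_J) : R :=
  Num.sqrt (m%:R) * (mu m i j - muL i j).

Definition nuhat (R : realType) (J : nat) (N : nat -> 'I_J -> nat) (nuL : 'I_J -> R)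
  (m : nat) (j : 'I_J) : R := Num.sqrt (m%:R) * ((N m j)%:R / m%:R - nuL j).

(* theta^n_j, with z*_{ij} = xi*_{ij} nu_j *)
Definition thetan (R : realType) (I J : nat) (E : {set 'I_I * 'I_J})
  (mu : nat -> 'I_I -> 'I_J -> R) (muL : 'I_I -> 'I_J -> R)
  (N : nat -> 'I_J -> nat) (nuL : 'I_J -> R) (xi : 'I_I -> 'I_J -> R)
  (m : nat) (j : 'I_J) : R :=
  nuhat N nuL m j + \sum_(i | (i, j) \in E) (muhat mu muL m i j / mu m i j) * (xi i j * nuL j).

Definition vartheta_feasible (R : realType) (I J : nat) (E : {set 'I_I * 'I_J})
  (lh : 'I_I -> R) (mun : 'I_I -> 'I_J -> R) (th : 'I_J -> R) (p : 'I_I -> R)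
  (v : R) (kappa : 'I_I -> 'I_J -> R) : Prop :=
  [/\ (forall i j, (i, j) \notin E -> kappa i j = 0),
      (forall i, lh i <= \sum_(j | (i, j) \in E) mun i j * kappa i j - v * p i) &
      (forall j, \sum_(i | (i, j) \in E) kappa i j = th j)].

Definition is_vartheta (R : realType) (I J : nat) (E : {set 'I_I * 'I_J})
  (lh : 'I_I -> R) (mun : 'I_I -> 'I_J -> R) (th : 'I_J -> R) (p : 'I_I -> R)
  (v : R) : Prop :=
  (exists kappa, vartheta_feasible E lh mun th p v kappa) /\
  (forall v' kappa, vartheta_feasible E lh mun th p v' kappa -> v' <= v).

Definition state (I : nat) := {ffun 'I_I -> nat}.

Definition up (I : nat) (x : state I) (i : 'I_I) : state I :=
  [ffun k => (x k + (k == i))%N].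
Definition down (I : nat) (x : state I) (i : 'I_I) : state I :=
  [ffun k => (x k - (k == i))%N].

Definition wc_action (I J : nat) (E : {set 'I_I * 'I_J}) (Nn : 'I_J -> nat)
  (x : state I) (z : 'I_I -> 'I_J -> nat) : Prop :=
  [/\ (forall i j, (i, j) \notin E -> z i j = 0%N),
      (forall i, (\sum_(j < J) z i j <= x i)%N),
      (forall j, (\sum_(i < I) z i j <= Nn j)%N) &
      (forall i j, (i, j) \in E ->
         (x i - \sum_(j' < J) z i j')%N = 0%N \/ (Nn j - \sum_(i' < I) z i' j)%N = 0%N)].

Definition wc_policy (I J : nat) (E : {set 'I_I * 'I_J}) (Nn : 'I_J -> nat)
  (z : state I -> 'I_I -> 'I_J -> nat) : Prop :=
  forall x, wc_action E Nn x (z x).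

(* ---------- CTMC on Z_+^I with jumps +e_i at rate lam i and -e_i at rate d x i ---------- *)

Section CTMC.
Variables (R : realType) (I : nat) (lam : 'I_I -> R) (d : state I -> 'I_I -> R).

Definition qtot (x : state I) : R := \sum_(i < I) (lam i + d x i).

(* one step of the embedded jump chain applied to f *)
Definition step_avg (f : state I -> R) (x : state I) : R :=
  \sum_(i < I) ((lam i / qtot x) * f (up x i) + (d x i / qtot x) * f (down x i)).

(* k-th iterate for the probability of ever hitting x (at a time >= 0) from y *)
Fixpoint hitp (x : state I) (k : nat) (y : state I) : R :=
  match k with
  | 0 => 0
  | k'.+1 => if y == x then 1 else step_avg (hitp x k') y
  end.

(* k-th iterate for the expected (continuous) time to hit x from y *)
Fixpoint hitt (x : state I) (k : nat) (y : state I) : R :=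
  match k with
  | 0 => 0
  | k'.+1 => if y == x then 0 else (qtot y)^-1 + step_avg (hitt x k') y
  end.

(* probability of returning to x (after the first jump) *)
Definition return_prob (x : state I) : \bar R :=
  ereal_sup (range (fun k => (step_avg (hitp x k) x)%:E)).

(* mean return time E_x[T_x], T_x = inf{t >= J_1 : X_t = x} *)
Definition mean_return (x : state I) : \bar R :=
  ereal_sup (range (fun k => ((qtot x)^-1 + step_avg (hitt x k) x)%:E)).

Definition ctmc_transient : Prop := forall x, (return_prob x < 1%:E)%E.
Definition ctmc_pos_recurrent : Prop := forall x, (mean_return x < +oo)%E.
End CTMC.

Definition dep_rate (R : realType) (I J : nat) (E : {set 'I_I * 'I_J})
  (mun : 'I_I -> 'I_J -> R) (z : state I -> 'I_I -> 'I_J -> nat)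
  (x : state I) (i : 'I_I) : R :=
  \sum_(j | (i, j) \in E) mun i j * (z x i j)%:R.

From Pilot Require Import Defs.
From mathcomp Require Import all_boot all_order all_algebra.
From mathcomp Require Import all_classical all_reals all_analysis.
From mathcomp Require Import zify ring lra.
Set Implicit Arguments. Unset Strict Implicit. Unset Printing Implicit Defensive.
Import Order.TTheory GRing.Theory Num.Theory numFieldNormedType.Exports.
Local Open Scope ring_scope.
Local Open Scope classical_set_scope.

(* Since the network graph is a tree, the service rates factor as
   mu^n_ij = u_j / w_i for positive node weights (w, u): a potential along
   the tree, well defined because closed walks in an acyclic graph have
   gain 1.  These weights certify the sign of vartheta^n_p.  The balanced
   linear equations "serve the inflated arrivals, exhaust every pool" are
   solvable on the tree (a rank count), and their solution, centred and
   scaled, is a feasible point of the LP; hence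
     sum_j u_j N^n_j <= sum_i w_i lam^n_i + vartheta^n_p * D   with D > 0.
   Under a work-conserving policy the weighted departure rate never exceeds
   sum_j u_j N^n_j, so vartheta^n_p < 0 means strict overload and
   vartheta^n_p = 0 at most critical load.  Two Lyapunov criteria for the
   embedded jump chain conclude: under overload a geometric function
   prod_i a_i^x_i is strictly superharmonic (transience); under critical
   load the linear function sum_i w_i x_i is a subharmonic escape function,
   which bounds P_0(tau_0 > k) below by c / k, so the mean number of jumps
   of a return diverges like the harmonic series (no positive recurrence). *)

Section ClosedWalks.
Variables (F : fieldType) (V : finType) (e : rel V) (g : V -> V -> F).
Hypothesis e_irr : forall a, ~~ e a a.
Hypothesis g_inv : forall a b, e a b -> g a b * g b a = 1.
Hypothesis e_acyclic : forall c : seq V, uniq c -> (3 <= size c)%N -> ~~ cycle e c.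

Fixpoint walk_gain (a : V) (s : seq V) : F :=
  if s is b :: s' then g a b * walk_gain b s' else 1.

Lemma walk_gain_cat a s1 s2 :
  walk_gain a (s1 ++ s2) = walk_gain a s1 * walk_gain (last a s1) s2.
Proof. by elim: s1 a => [|b s IH] a /=; rewrite ?mul1r // IH mulrA. Qed.

Lemma notuniq_split (s : seq V) : ~~ uniq s ->
  exists s1 x s2 s3, s = s1 ++ x :: s2 ++ x :: s3.
Proof.
elim: s => [|y t IH] //=; rewrite negb_and negbK; case/orP.
  by case/splitPr=> t1 t2; exists [::], y, t1, t2.
by move/IH=> [s1 [x [s2 [s3 ->]]]]; exists (y :: s1), x, s2, s3.
Qed.

(* a closed walk without repeated vertices is a back-and-forth step *)
Lemma simple_closed_walk_gain a t :
  path e a (rcons t a) -> a \notin t -> uniq t -> walk_gain a (rcons t a) = 1.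
Proof.
case: t => [|b [|c t]] /=.
- by rewrite andbT (negbTE (e_irr a)).
- by case/and3P=> eab eba _; rewrite mulr1 g_inv.
move=> Hpath Ha Ut; have Uc : uniq [:: a, b, c & t] by rewrite /= Ha.
by have := e_acyclic Uc isT; rewrite /= Hpath.
Qed.

(* induction on the length: a repeated vertex splits the walk into two
   shorter closed walks *)
Lemma closed_walk_gain a t : path e a t -> last a t = a -> walk_gain a t = 1.
Proof.
have [n] := ubnP (size t); elim: n a t => // n IH a t Hsize Hpath Hlast.
have [Ut | /notuniq_split [s1 [x [s2 [s3 Ht]]]]] := boolP (uniq t).
  move: Hsize Hpath Hlast Ut; case/lastP: t => [|t' b] //.
  rewrite last_rcons rcons_uniq => _ Hpath Hb; subst b => /andP [Ha Ut'].
  exact: simple_closed_walk_gain.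
have Ht' : t = rcons s1 x ++ (rcons s2 x ++ s3) by rewrite Ht -!cat_rcons catA.
move: Hsize Hpath Hlast; rewrite Ht' !size_cat !size_rcons.
rewrite !cat_path !last_cat !last_rcons => Hsize /and3P [P1 P2 P3] Hlast.
have inner : walk_gain x (rcons s2 x) = 1.
  by apply: IH; rewrite ?last_rcons ?size_rcons //; lia.
have outer : walk_gain a (rcons s1 x ++ s3) = 1.
  apply: IH; last by rewrite last_cat last_rcons.
    by rewrite size_cat size_rcons; lia.
  by rewrite cat_path P1 last_rcons P3.
by rewrite !walk_gain_cat !last_rcons inner mul1r -outer walk_gain_cat last_rcons.
Qed.
End ClosedWalks.

Section TreePotential.
Variables (F : numFieldType) (V : finType) (e : rel V) (g : V -> V -> F).
Hypothesis e_sym : symmetric e.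
Hypothesis e_irr : forall a, ~~ e a a.
Hypothesis g_inv : forall a b, e a b -> g a b * g b a = 1.
Hypothesis g_pos : forall a b, e a b -> 0 < g a b.
Hypothesis e_acyclic : forall c : seq V, uniq c -> (3 <= size c)%N -> ~~ cycle e c.
Hypothesis e_conn : forall u v, connect e u v.

Lemma walk_gain_gt0 a s : path e a s -> 0 < walk_gain g a s.
Proof.
elim: s a => [|b s IH] a /=; first by rewrite ltr01.
by case/andP=> Hab Hp; rewrite mulr_gt0 ?g_pos ?IH.
Qed.

(* Phi v is the gain of any walk from the root r to v *)
Lemma tree_potential (r : V) :
  exists Phi : V -> F, (forall a, 0 < Phi a) /\
     (forall a b, e a b -> Phi b = Phi a * g a b).
Proof.
have /fin_all_exists [P HP] : forall v, exists P, path e r P && (last r P == v).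
  by move=> v; case/connectP: (e_conn r v) => P H1 H2; exists P; rewrite H1 H2 eqxx.
exists (fun v => walk_gain g r (P v)); split.
  by move=> a; apply: walk_gain_gt0; case/andP: (HP a).
move=> a b Hab.
case/andP: (HP a) => Hpa /eqP Hla; case/andP: (HP b) => Hpb /eqP Hlb.
set Q := rev (belast r (P b)).
have HQ : path e b Q.
  rewrite /Q; have := rev_path e r (P b); rewrite Hlb => ->.
  by rewrite (@eq_path _ _ e) // => x y /=; rewrite e_sym.
have HlQ : last b Q = r.
  rewrite /Q; move: Hlb; case: (P b) => [|y s] /=; first by move=> ->.
  by rewrite rev_cons last_rcons.
have C1 : walk_gain g r (P b ++ Q) = 1.
  apply: (closed_walk_gain e_irr g_inv e_acyclic).
    by rewrite cat_path Hpb Hlb HQ.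
  by rewrite last_cat Hlb.
have C2 : walk_gain g r (P a ++ b :: Q) = 1.
  apply: (closed_walk_gain e_irr g_inv e_acyclic).
    by rewrite cat_path Hpa Hla /= Hab HQ.
  by rewrite last_cat Hla /= HlQ.
rewrite walk_gain_cat Hlb in C1; rewrite walk_gain_cat Hla /= in C2.
have Hq : walk_gain g b Q != 0 by rewrite gt_eqF ?walk_gain_gt0.
by apply: (mulIf Hq); rewrite C1 -C2 mulrA.
Qed.
End TreePotential.

Lemma tree_node_weights (F : numFieldType) (I J : nat) (E : {set 'I_I * 'I_J})
    (m : 'I_I -> 'I_J -> F) (i0 : 'I_I) :
  is_tree E -> (forall i j, (i, j) \in E -> 0 < m i j) ->
  exists w : 'I_I -> F, exists u : 'I_J -> F,
    [/\ forall i, 0 < w i, forall j, 0 < u j &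
        forall i j, (i, j) \in E -> w i * m i j = u j].
Proof.
move=> [Hconn Hacyc] m_gt0.
pose g (a b : 'I_I + 'I_J) : F := match a, b with
  | inl i, inr j => m i j | inr j, inl i => (m i j)^-1 | _, _ => 1 end.
have e_sym : symmetric (vadj E) by case=> a [] b.
have e_irr : forall a, ~~ vadj E a a by case.
have g_inv : forall a b, vadj E a b -> g a b * g b a = 1.
  case=> a [] b //= H; [rewrite mulfV | rewrite mulVf] => //; exact: lt0r_neq0 (m_gt0 _ _ H).
have g_pos : forall a b, vadj E a b -> 0 < g a b.
  by case=> a [] b //= H; rewrite ?invr_gt0 m_gt0.
have [Phi [Phi_gt0 HPhi]] := tree_potential e_sym e_irr g_inv g_pos Hacyc Hconn (inl i0).
exists (fun i => Phi (inl i)), (fun j => Phi (inr j)); split => // i j Hij.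
by rewrite (HPhi (inl i) (inr j)).
Qed.

(* Flows on the bipartite tree: if w_i mu_ij = u_j on the edges, the linear
   map z |-> ((sum_j mu_ij z_ij)_i, (sum_i z_ij)_j) on edge arrays has as
   image exactly the hyperplane {(b, c) | sum_i w_i b_i = sum_j u_j c_j}.
   Its cokernel is spanned by (w, -u) because the graph is connected. *)
Section TreeFlows.
Variables (F : fieldType) (I J : nat) (E : {set 'I_I * 'I_J}).
Variables (mu : 'I_I -> 'I_J -> F) (w : 'I_I -> F) (u : 'I_J -> F).
Hypothesis mu_nz : forall i j, (i, j) \in E -> mu i j != 0.
Hypothesis w_nz : forall i, w i != 0.
Hypothesis u_nz : forall j, u j != 0.
Hypothesis wu : forall i j, (i, j) \in E -> w i * mu i j = u j.
Hypothesis conn : forall a b, connect (vadj E) a b.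
Variable i0 : 'I_I.

Local Notation pairs := ('I_I * 'I_J)%type.
Local Notation npairs := #|{: pairs}|.

Definition rowIJ (f : 'I_I -> F) (g : 'I_J -> F) : 'rV[F]_(I + J) :=
  \row_k (match fintype.split k with inl i => f i | inr j => g j end).

Lemma rowIJ_l f g i : rowIJ f g 0 (lshift J i) = f i.
Proof. by rewrite mxE (unsplitK (inl _ i)). Qed.

Lemma rowIJ_r f g j : rowIJ f g 0 (rshift I j) = g j.
Proof. by rewrite mxE (unsplitK (inr _ j)). Qed.

Definition balance : 'rV[F]_(I + J) := rowIJ w (fun j => - u j).

Definition flowmx : 'M[F]_(npairs, I + J) :=
  \matrix_(k < npairs) let: (i, j) := enum_val k in
    if (i, j) \in E then rowIJ (fun i' => (i' == i)%:R * mu i j)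
                               (fun j' => (j' == j)%:R) else 0.

Lemma sum_vertices (G : 'I_(I + J) -> F) :
  \sum_k G k = \sum_i G (lshift J i) + \sum_j G (rshift I j).
Proof. by rewrite big_split_ord. Qed.

Lemma sum_delta (T : finType) (t : T) (G : T -> F) : \sum_s (s == t)%:R * G s = G t.
Proof.
rewrite (bigD1 t) //= eqxx mul1r big1 ?addr0 // => s /negbTE ->; exact: mul0r.
Qed.

Lemma sum_pairs (G : 'I_npairs -> F) :
  \sum_k G k = \sum_i \sum_j G (enum_rank (i, j)).
Proof.
rewrite (reindex (@enum_rank _)) /=; last by apply: onW_bij; exact: enum_rank_bij.
by rewrite pair_bigA; apply: eq_bigr => -[].
Qed.

Lemma flowmx_l k i : flowmx k (lshift J i) =
  if enum_val k \in E then (i == (enum_val k).1)%:R * mu i (enum_val k).2 else 0.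
Proof.
rewrite mxE; case: (enum_val k) => i' j' /=.
case: ifP => _; last by rewrite mxE.
by rewrite rowIJ_l; case: eqP => [->|]; rewrite ?mul0r.
Qed.

Lemma flowmx_r k j : flowmx k (rshift I j) =
  if enum_val k \in E then (j == (enum_val k).2)%:R else 0.
Proof.
by rewrite mxE; case: (enum_val k) => i' j' /=; case: ifP => _; rewrite ?rowIJ_r ?mxE.
Qed.

Lemma flowmx_dot i j (r : 'rV[F]_(I + J)) : (i, j) \in E ->
  (r *m flowmx^T) 0 (enum_rank (i, j)) = mu i j * r 0 (lshift J i) + r 0 (rshift I j).
Proof.
move=> Hij; rewrite mxE sum_vertices.
under eq_bigr do rewrite mxE flowmx_l enum_rankK Hij /= mulrC -mulrA.
under [X in _ + X]eq_bigr do rewrite mxE flowmx_r enum_rankK Hij /= mulrC.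
by rewrite !sum_delta.
Qed.

Lemma flowmx_balanced : (flowmx <= kermx balance^T)%MS.
Proof.
apply/sub_kermxP; rewrite -[flowmx]trmxK -trmx_mul -[0]trmx0; congr trmx.
apply/rowP => k; rewrite [RHS]mxE.
case Ek : (enum_val k) => [i j]; have -> : k = enum_rank (i, j) by rewrite -Ek enum_valK.
case Hij : ((i, j) \in E).
  by rewrite flowmx_dot // /balance rowIJ_l rowIJ_r mulrC wu // subrr.
by rewrite mxE sum_vertices !big1 ?addr0 // => ? _;
  rewrite [flowmx^T _ _]mxE ?flowmx_l ?flowmx_r enum_rankK Hij mulr0.
Qed.

Definition vidx (v : 'I_I + 'I_J) : 'I_(I + J) :=
  match v with inl i => lshift J i | inr j => rshift I j end.

Lemma vidx_split k : vidx (fintype.split k) = k.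
Proof. by rewrite -{2}(splitK k); case: (fintype.split k). Qed.

(* a vertex vector orthogonal to all rows is a multiple of (w, -u): the
   ratio r_v / balance_v is constant along edges, hence on the tree *)
Lemma flowmx_cokernel (r : 'rV[F]_(I + J)) : r *m flowmx^T = 0 -> (r <= balance)%MS.
Proof.
move=> Hr.
have Hedge i j : (i, j) \in E -> r 0 (rshift I j) = - (mu i j * r 0 (lshift J i)).
  by move=> Hij; apply/eqP; rewrite -addr_eq0 addrC -(flowmx_dot _ Hij) Hr mxE.
pose rho v := r 0 (vidx v) / balance 0 (vidx v).
have rho_edge a b : vadj E a b -> rho a = rho b.
  have key i j : (i, j) \in E -> rho (inl i) = rho (inr j).
    move=> Hij; rewrite /rho /= /balance !rowIJ_l !rowIJ_r (Hedge i j Hij) -(wu Hij).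
    by field; rewrite oppr_eq0 mulf_neq0 ?w_nz ?mu_nz.
  by case: a b => [i|j] [i'|j'] //= H; [apply: key | symmetry; apply: key].
have rho_const v : rho v = rho (inl i0).
  case/connectP: (conn (inl i0) v) => s Hs ->.
  elim: s (inl i0) Hs => [|b s IH] a //= /andP [Hab Hs].
  by rewrite IH // (rho_edge _ _ Hab).
apply/sub_rVP; exists (rho (inl i0)); apply/rowP => k; rewrite mxE.
have bal_nz : balance 0 k != 0.
  rewrite -(vidx_split k).
  by case: (fintype.split k) => [i|j]; rewrite /balance /= ?rowIJ_l ?rowIJ_r ?oppr_eq0.
by rewrite -(rho_const (fintype.split k)) /rho vidx_split divfK.
Qed.

Lemma balance_neq0 : balance != 0.
Proof.
apply/eqP => /rowP /(_ (lshift J i0)); rewrite rowIJ_l mxE.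
by apply/eqP; exact: w_nz.
Qed.

Lemma flowmx_image_l (D : 'rV[F]_npairs) i :
  (D *m flowmx) 0 (lshift J i) = \sum_(j | (i, j) \in E) mu i j * D 0 (enum_rank (i, j)).
Proof.
rewrite mxE sum_pairs (bigD1 i) //= [X in _ + X]big1 => [|i' Hi'].
  rewrite addr0 [RHS]big_mkcond; apply: eq_bigr => j _.
  by rewrite flowmx_l enum_rankK /= eqxx mul1r; case: ifP => _; rewrite ?mulr0 // mulrC.
apply: big1 => j _; rewrite flowmx_l enum_rankK /= eq_sym (negbTE Hi').
by case: ifP => _; rewrite ?mul0r mulr0.
Qed.

Lemma flowmx_image_r (D : 'rV[F]_npairs) j :
  (D *m flowmx) 0 (rshift I j) = \sum_(i | (i, j) \in E) D 0 (enum_rank (i, j)).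
Proof.
rewrite mxE sum_pairs [RHS]big_mkcond; apply: eq_bigr => i _.
rewrite (bigD1 j) //= big1 => [|j' Hj'].
  by rewrite addr0 flowmx_r enum_rankK /= eqxx; case: ifP => _; rewrite ?mulr0 ?mulr1.
by rewrite flowmx_r enum_rankK /= eq_sym (negbTE Hj'); case: ifP => _; rewrite mulr0.
Qed.

(* rank count: the cokernel of the flow matrix is at most a line, so its
   row space is the whole hyperplane orthogonal to (w, -u) *)
Lemma flowmx_rowspace : (kermx balance^T <= flowmx)%MS.
Proof.
have [_ <-] := mxrank_leqif_sup flowmx_balanced.
have coker : (kermx flowmx^T <= balance)%MS.
  by apply/row_subP => k; apply: flowmx_cokernel; rewrite -row_mul mulmx_ker row0.
have := mxrankS flowmx_balanced; have := mxrankS coker.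
by rewrite !mxrank_ker !mxrank_tr rank_rV balance_neq0; lia.
Qed.

Lemma tree_flow_exists (b : 'I_I -> F) (c : 'I_J -> F) :
  \sum_i w i * b i = \sum_j u j * c j ->
  exists z : 'I_I -> 'I_J -> F,
    (forall i, \sum_(j | (i, j) \in E) mu i j * z i j = b i) /\
    (forall j, \sum_(i | (i, j) \in E) z i j = c j).
Proof.
move=> Hbal.
have : (rowIJ b c <= kermx balance^T)%MS.
  apply/sub_kermxP; apply/rowP => k; rewrite (ord1 k) !mxE sum_vertices.
  under eq_bigr do rewrite [balance^T _ _]mxE /balance !rowIJ_l mulrC.
  under [X in _ + X]eq_bigr do rewrite [balance^T _ _]mxE /balance !rowIJ_r mulrN mulrC.
  by rewrite sumrN Hbal subrr.
move=> /submx_trans /(_ flowmx_rowspace) /submxP [D HD].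
exists (fun i j => D 0 (enum_rank (i, j))); split => [i|j].
  by rewrite -flowmx_image_l -HD rowIJ_l.
by rewrite -flowmx_image_r -HD rowIJ_r.
Qed.
End TreeFlows.

Lemma vartheta_feasible_of_flow (R : realType) (I J : nat) (E : {set 'I_I * 'I_J})
  (lam : nat -> 'I_I -> R) (mu : nat -> 'I_I -> 'I_J -> R) (N : nat -> 'I_J -> nat)
  (lamL : 'I_I -> R) (nuL : 'I_J -> R) (muL : 'I_I -> 'I_J -> R)
  (xi : 'I_I -> 'I_J -> R) (n : nat) (p : 'I_I -> R) (eps : R) (z : 'I_I -> 'I_J -> R) :
  (forall i j, (i, j) \in E -> 0 < mu n i j) ->
  CRP E lamL muL nuL xi -> (0 < n)%N ->
  (forall i, \sum_(j | (i, j) \in E) mu n i j * z i j = lam n i + Num.sqrt n%:R * eps * p i) ->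
  (forall j, \sum_(i | (i, j) \in E) z i j = (N n j)%:R) ->
  exists kappa, vartheta_feasible E (lamhat lam lamL n) (mu n)
                  (thetan E mu muL N nuL xi n) p eps kappa.
Proof.
move=> mu_gt0 [[_ [_ xi_rates]] _ _ xi_pools _] n_gt0 z_rates z_pools.
set sq : R := Num.sqrt n%:R.
have sq_neq0 : sq != 0 by rewrite gt_eqF // sqrtr_gt0 ltr0n.
have sq2 : sq * sq = n%:R by rewrite -expr2 sqr_sqrtr // ler0n.
(* the fluid flow expressed in number of servers *)
pose T i j := xi i j * nuL j * muL i j / mu n i j.
exists (fun i j => if (i, j) \in E then (z i j - n%:R * T i j) / sq else 0); split.
- by move=> i j /negbTE ->.
- move=> i; rewrite le_eqVlt; apply/orP; left; apply/eqP.
  have -> : \sum_(j | (i, j) \in E) mu n i j * (if (i, j) \in E then (z i j - n%:R * T i j) / sq else 0)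
      = (lam n i + sq * eps * p i - n%:R * lamL i) / sq.
    rewrite -z_rates -xi_rates mulr_sumr -sumrB mulr_suml; apply: eq_bigr => j Hj.
    rewrite Hj /T; have := lt0r_neq0 (mu_gt0 _ _ Hj).
    by move: (mu n i j) => m hm; field; rewrite ?hm ?sq_neq0.
  by rewrite /lamhat -/sq; field; rewrite ?sq_neq0.
- move=> j; rewrite /thetan /nuhat /muhat -/sq.
  have -> : \sum_(i | (i, j) \in E) (if (i, j) \in E then (z i j - n%:R * T i j) / sq else 0)
      = ((N n j)%:R - n%:R * \sum_(i | (i, j) \in E) T i j) / sq.
    by rewrite -z_pools mulr_sumr -sumrB mulr_suml; apply: eq_bigr => i ->.
  have -> : \sum_(i | (i, j) \in E) (sq * (mu n i j - muL i j) / mu n i j) * (xi i j * nuL j)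
      = sq * nuL j - sq * \sum_(i | (i, j) \in E) T i j.
    rewrite -[X in sq * X - _]mul1r -(xi_pools j) mulr_suml !mulr_sumr -sumrB.
    apply: eq_bigr => i Hi; rewrite /T; have := lt0r_neq0 (mu_gt0 _ _ Hi).
    by move: (mu n i j) => m hm; field; rewrite ?hm ?sq_neq0.
  by rewrite -sq2; field; rewrite ?sq_neq0.
Qed.

(* Lower bound on vartheta^n_p through node weights (w, u) with
   w_i mu^n_ij = u_j: the weighted capacity sum_j u_j N^n_j exceeds the
   weighted arrival rate sum_i w_i lam^n_i by at most vartheta^n_p * D,
   where D = sqrt n * sum_i w_i p_i > 0.  The proof feeds the flow solving
   the balanced equations with eps = (capacity - arrivals) / D into the LP. *)
Lemma capacity_le_arrivals (R : realType) (I J : nat) (E : {set 'I_I * 'I_J})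
  (lam : nat -> 'I_I -> R) (mu : nat -> 'I_I -> 'I_J -> R) (N : nat -> 'I_J -> nat)
  (lamL : 'I_I -> R) (nuL : 'I_J -> R) (muL : 'I_I -> 'I_J -> R)
  (xi : 'I_I -> 'I_J -> R) (n : nat) (p : 'I_I -> R) (w : 'I_I -> R) (u : 'I_J -> R)
  (i0 : 'I_I) (v : R) :
  (forall a b, connect (vadj E) a b) ->
  (forall i j, (i, j) \in E -> 0 < mu n i j) ->
  CRP E lamL muL nuL xi -> (0 < n)%N -> (forall i, 0 < p i) ->
  (forall i, 0 < w i) -> (forall j, 0 < u j) ->
  (forall i j, (i, j) \in E -> w i * mu n i j = u j) ->
  is_vartheta E (lamhat lam lamL n) (mu n) (thetan E mu muL N nuL xi n) p v ->
  exists2 D : R, 0 < D & \sum_j u j * (N n j)%:R <= \sum_i w i * lam n i + v * D.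
Proof.
move=> conn mu_gt0 crp n_gt0 p_gt0 w_gt0 u_gt0 wu [_ v_max].
set L := \sum_i w i * lam n i; set U := \sum_j u j * (N n j)%:R.
set D := Num.sqrt n%:R * \sum_i w i * p i.
have D_gt0 : 0 < D.
  rewrite mulr_gt0 ?sqrtr_gt0 ?ltr0n // (bigD1 i0) //= ltr_pwDl ?mulr_gt0 //.
  by apply: sumr_ge0 => i _; rewrite mulr_ge0 // ltW.
exists D => //; pose eps := (U - L) / D.
have balanced : \sum_i w i * (lam n i + Num.sqrt n%:R * eps * p i) = U.
  transitivity (L + eps * D); last by rewrite /eps divfK ?gt_eqF // addrC subrK.
  by rewrite /L /D !mulr_sumr -big_split /=; apply: eq_bigr => i _; ring.
have [z [z_rates z_pools]] := tree_flow_exists (fun i j H => lt0r_neq0 (mu_gt0 i j H))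
  (fun i => lt0r_neq0 (w_gt0 i)) (fun j => lt0r_neq0 (u_gt0 j)) wu conn i0 balanced.
have [kappa feas] := vartheta_feasible_of_flow mu_gt0 crp n_gt0 z_rates z_pools.
by have := v_max _ _ feas; rewrite /eps ler_pdivrMr // lerBlDl.
Qed.

Lemma div_one_sub_le (R : realFieldType) (d t b : R) :
  0 <= d -> 0 <= t -> 0 < b -> b <= 1 - t -> d / (1 - t) <= d + t / b * d.
Proof.
move=> d_ge0 t_ge0 b_gt0 b_le.
have t_lt1 : 0 < 1 - t by apply: lt_le_trans b_le.
have -> : d / (1 - t) = d + t / (1 - t) * d by field; rewrite gt_eqF.
by rewrite lerD2l ler_wpM2r // ler_wpM2l // lef_pV2 ?posrE.
Qed.

Section JumpChain.
Variables (R : realType) (I : nat) (lam : 'I_I -> R) (d : state I -> 'I_I -> R).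
Hypothesis lam_gt0 : forall i, 0 < lam i.
Hypothesis d_ge0 : forall x i, 0 <= d x i.
Hypothesis d_empty : forall (x : state I) i, x i = 0%N -> d x i = 0.
Variable i0 : 'I_I.

Local Notation q := (qtot lam d).
Local Notation Pj := (step_avg lam d).

Lemma qtot_gt0 x : 0 < q x.
Proof.
have term_gt0 i : 0 < lam i + d x i by rewrite ltr_wpDr ?d_ge0 ?lam_gt0.
rewrite /qtot (bigD1 i0) //= ltr_wpDr ?term_gt0 //.
by apply: sumr_ge0 => i _; rewrite ltW ?term_gt0.
Qed.

Lemma step_avgD (f g : state I -> R) a b x :
  Pj (fun y => a * f y + b * g y) x = a * Pj f x + b * Pj g x.
Proof. by rewrite /step_avg !mulr_sumr -big_split /=; apply: eq_bigr => i _; ring. Qed.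

Lemma step_avgZ (f : state I -> R) a x : Pj (fun y => a * f y) x = a * Pj f x.
Proof. by rewrite /step_avg !mulr_sumr /=; apply: eq_bigr => i _; ring. Qed.

Lemma step_avg_cst c x : Pj (fun _ => c) x = c.
Proof.
rewrite /step_avg (eq_bigr (fun i => c / q x * (lam i + d x i))); last by move=> i _; ring.
by rewrite -mulr_sumr mulfVK // gt_eqF // qtot_gt0.
Qed.

(* the one-step average only sees the neighbours of x *)
Lemma step_avg_le_at (f g : state I -> R) x :
  (forall i, f (Defs.up x i) <= g (Defs.up x i)) ->
  (forall i, f (Defs.down x i) <= g (Defs.down x i)) -> Pj f x <= Pj g x.
Proof.
move=> Hu Hd; rewrite /step_avg; apply: ler_sum => i _.
have hq := qtot_gt0 x.
by rewrite lerD // ler_wpM2l // divr_ge0 // ltW.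
Qed.

Lemma step_avg_le (f g : state I -> R) x : (forall y, f y <= g y) -> Pj f x <= Pj g x.
Proof. by move=> H; apply: step_avg_le_at. Qed.

Lemma up_down (x : state I) i : (0 < x i)%N -> Defs.up (Defs.down x i) i = x.
Proof.
move=> Hx; apply/ffunP => k; rewrite !ffunE.
by case: eqP => [->|_]; rewrite ?addn0 ?subn0 // subnK.
Qed.

(* Transience: a positive function f with Pj f < f everywhere (a product of
   geometric factors a_i^x_i) bounds the hitting probabilities by f / f x. *)
Lemma transient_of_geometric_drift (a : 'I_I -> R) : (forall i, 0 < a i) ->
  (forall x, \sum_i (lam i * a i + d x i / a i) < q x) -> ctmc_transient lam d.
Proof.
move=> a_gt0 drift.
pose f (y : state I) := \prod_i a i ^+ y i.
have f_gt0 y : 0 < f y by apply: prodr_gt0 => i _; apply: exprn_gt0.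
have f_up y i : f (Defs.up y i) = f y * a i.
  rewrite /f (eq_bigr (fun k => a k ^+ y k * a k ^+ (k == i))); last first.
    by move=> k _; rewrite ffunE exprD.
  have delta : \prod_k a k ^+ (k == i) = a i.
    by rewrite (bigD1 i) //= eqxx expr1 big1 ?mulr1 // => k /negbTE ->.
  by rewrite big_split /= delta.
have f_down y i : d y i * f (Defs.down y i) = d y i * (f y / a i).
  have [y0|y_gt0] := posnP (y i); first by rewrite d_empty // !mul0r.
  by have := f_up (Defs.down y i) i; rewrite up_down // => ->; rewrite mulfK // gt_eqF.
have f_super y : Pj f y < f y.
  rewrite /step_avg (eq_bigr (fun i => f y / q y * (lam i * a i + d y i / a i))); last first.
    by move=> i _; rewrite f_up [d y i / q y * _]mulrAC f_down; ring.
  have hq := qtot_gt0 y.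
  apply: (@lt_le_trans _ _ (f y / q y * q y)); last by rewrite mulfVK // gt_eqF.
  by rewrite -mulr_sumr ltr_pM2l ?divr_gt0.
move=> x; pose g y := (f x)^-1 * f y.
have g_super y : Pj g y < g y by rewrite step_avgZ ltr_pM2l ?invr_gt0.
have hit k y : hitp lam d x k y <= g y.
  elim: k y => [|k IH] y /=; first by rewrite mulr_ge0 // ltW ?invr_gt0.
  case: eqP => [->|_]; first by rewrite /g mulVf // gt_eqF.
  exact: le_trans (step_avg_le _ IH) (ltW (g_super y)).
apply: (@le_lt_trans _ _ (Pj g x)%:E).
  by apply: ge_ereal_sup => _ [k _ <-]; rewrite lee_fin; apply: step_avg_le.
by rewrite lte_fin (lt_le_trans (g_super x)) // /g mulVf // gt_eqF.
Qed.

(* Overload: if the weighted departure rate sum_i w_i d x i never exceeds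
   U < sum_i w_i lam_i, the geometric factors a_i = 1 - s w_i (s small)
   satisfy the drift condition above. *)
Lemma transient_of_overload (w : 'I_I -> R) (U : R) : (forall i, 0 < w i) ->
  (forall x, \sum_i w i * d x i <= U) -> U < \sum_i w i * lam i ->
  ctmc_transient lam d.
Proof.
move=> w_gt0 dep_le overload; set L := \sum_i w i * lam i in overload.
have U_ge0 : 0 <= U.
  apply: le_trans (dep_le [ffun=> 0%N]).
  by apply: sumr_ge0 => i _; rewrite mulr_ge0 ?d_ge0 // ltW.
have L_gt0 : 0 < L by apply: le_lt_trans overload.
pose W := \sum_i w i.
have w_le i : w i <= W by rewrite /W (bigD1 i) //= lerDl sumr_ge0 // => k _; rewrite ltW.
have W_gt0 : 0 < W by apply: lt_le_trans (w_le i0).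
(* beta lies strictly between U / L and 1 *)
pose beta := (L + U) / (2 * L).
have beta_gt0 : 0 < beta by rewrite divr_gt0 ?mulr_gt0 // ltr_wpDr.
have beta_lt1 : beta < 1 by rewrite ltr_pdivrMr ?mulr_gt0 //; lra.
have U_lt : U / beta < L.
  rewrite ltr_pdivrMr //.
  have -> : L * beta = (L + U) / 2 by rewrite /beta; field; rewrite gt_eqF.
  lra.
pose s := (1 - beta) / W.
have s_gt0 : 0 < s by rewrite divr_gt0 // subr_gt0.
pose a i := 1 - s * w i.
have a_ge i : beta <= a i.
  have : s * w i <= s * W by rewrite ler_pM2l.
  by rewrite /a /s divfK ?gt_eqF //; lra.
apply: (transient_of_geometric_drift (a := a)) => [i|x].
  exact: lt_le_trans (a_ge i).
have term i : lam i * a i + d x i / a i <=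
    (lam i + d x i) - s * (w i * lam i) + s / beta * (w i * d x i).
  have := div_one_sub_le (d_ge0 x i) (mulr_ge0 (ltW s_gt0) (ltW (w_gt0 i))) beta_gt0 (a_ge i).
  by rewrite -/(a i) /a => le_d; rewrite mulrBr mulr1; lra.
apply: le_lt_trans (ler_sum _ (fun i _ => term i)) _.
rewrite big_split /= sumrB -!mulr_sumr -/L -/(qtot _ _ x).
have : s / beta * \sum_i w i * d x i <= s / beta * U.
  by rewrite ler_pM2l ?dep_le // divr_gt0.
have : s / beta * U < s * L by rewrite mulrAC -mulrA ltr_pM2l.
lra.
Qed.

(* Expected number of jumps before hitting o, truncated after k jumps. *)
Fixpoint steps_before (o : state I) (k : nat) (y : state I) : R :=
  if k is k'.+1 then (if y == o then 0 else 1 + Pj (steps_before o k') y) else 0.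

(* E_y[V(Y_{k /\ tau_o})] for the jump chain Y stopped at o, with value 0 at o. *)
Fixpoint stopped_mean (V : state I -> R) (o : state I) (k : nat) (y : state I) : R :=
  if k is k'.+1 then (if y == o then 0 else Pj (stopped_mean V o k') y) else V y.

(* P_y(tau_o > k): probability that the jump chain avoids o for k jumps *)
Definition survival (o : state I) (k : nat) (y : state I) : R :=
  steps_before o k.+1 y - steps_before o k y.

Lemma survival_ge0 o k y : 0 <= survival o k y.
Proof.
rewrite subr_ge0; elim: k y => [|k IH] y /=; case: (y == o) => //.
  by rewrite step_avg_cst addr0 ler01.
by rewrite lerD2l; apply: step_avg_le.
Qed.

Lemma survival_succ o k y : y != o -> survival o k.+1 y = Pj (survival o k) y.
Proof.
move=> y_neq.
have -> : survival o k = fun z => 1 * steps_before o k.+1 z + (-1) * steps_before o k z.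
  by apply: funext => z; rewrite /survival; ring.
by rewrite step_avgD /survival /= (negbTE y_neq); ring.
Qed.

Lemma steps_before_telescope o K :
  Pj (steps_before o K) o = \sum_(0 <= k < K) Pj (survival o k) o.
Proof.
elim: K => [|K IH]; first by rewrite big_geq // /= step_avg_cst.
rewrite big_nat_recr // -IH.
rewrite (_ : steps_before o K.+1 = fun z => 1 * steps_before o K z + 1 * survival o K z).
  by rewrite step_avgD !mul1r.
by apply: funext => z; rewrite /survival; ring.
Qed.

(* A function V vanishing at o, subharmonic for the jump chain, with
   increments at most W, makes the chain leave o "upwards": the mean of the
   stopped process is squeezed between V y and (V y + W k) P_y(tau_o > k). *)
Section Escape.
Variables (V : state I -> R) (W : R) (o : state I).
Hypothesis V_o : V o = 0.
Hypothesis V_sub : forall y, V y <= Pj V y.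
Hypothesis V_up : forall y i, V (Defs.up y i) <= V y + W.
Hypothesis V_down : forall y i, V (Defs.down y i) <= V y.
Hypothesis W_ge0 : 0 <= W.

Lemma stopped_mean_ge k y : V y <= stopped_mean V o k y.
Proof.
elim: k y => [|k IH] y //=; case: eqP => [->|_]; first by rewrite V_o.
exact: le_trans (V_sub y) (step_avg_le _ IH).
Qed.

Lemma survival_weighted k y :
  Pj (fun z => (V z + W * k%:R) * survival o k z) y <= (V y + W * k.+1%:R) * Pj (survival o k) y.
Proof.
rewrite -step_avgZ; apply: step_avg_le_at => i; apply: ler_wpM2r; rewrite ?survival_ge0 //.
  by have := V_up y i; rewrite -natr1 mulrDr mulr1; lra.
by rewrite lerD // ler_wpM2l // ler_nat.
Qed.

Lemma stopped_mean_le k y : stopped_mean V o k y <= (V y + W * k%:R) * survival o k y.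
Proof.
elim: k y => [|k IH] y /=.
  rewrite /survival /=; case: eqP => [->|_]; first by rewrite V_o !mulr0.
  by rewrite step_avg_cst !mulr0 !addr0 subr0 mulr1.
case: eqP => [->|/eqP y_neq]; first by rewrite /survival /= eqxx subrr mulr0.
by rewrite survival_succ //; apply: le_trans (survival_weighted k y); apply: step_avg_le.
Qed.

Lemma escape_le_survival k : Pj V o <= W * k.+1%:R * Pj (survival o k) o.
Proof.
apply: le_trans (step_avg_le _ (stopped_mean_ge k)) _.
apply: le_trans (step_avg_le _ (stopped_mean_le k)) _.
by apply: le_trans (survival_weighted k o) _; rewrite V_o add0r.
Qed.
End Escape.

(* With total jump rates at most Q, each jump takes mean time >= 1 / Q, so a
   finite mean return time to o bounds the mean number of jumps of a
   return. *)
Lemma pos_recurrent_steps_bounded (Q : R) (o : state I) :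
  (forall x, q x <= Q) -> ctmc_pos_recurrent lam d ->
  exists M, forall K, Pj (steps_before o K) o <= M.
Proof.
move=> q_le pos_rec; have Q_gt0 : 0 < Q := lt_le_trans (qtot_gt0 o) (q_le o).
have steps_le k y : steps_before o k y / Q <= hitt lam d o k y.
  elim: k y => [|k IH] y /=; first by rewrite mul0r.
  case: eqP => _; first by rewrite mul0r.
  rewrite mulrDl mul1r lerD ?lef_pV2 ?posrE ?qtot_gt0 ?q_le //.
  by rewrite mulrC -step_avgZ; apply: step_avg_le => z; rewrite mulrC.
have [M HM] : exists M, forall k, (q o)^-1 + Pj (hitt lam d o k) o <= M.
  have := pos_rec o; rewrite /mean_return; set s := ereal_sup _ => s_lt.
  have ub k : (((q o)^-1 + Pj (hitt lam d o k) o)%:E <= s)%E.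
    by apply: ereal_sup_ubound; exists k.
  move: s_lt ub; case: s => [M| |] s_lt ub; first by exists M => k; rewrite -lee_fin.
    by rewrite ltxx in s_lt.
  by have := ub 0%N; rewrite leeNy_eq.
exists (Q * M) => K; rewrite -ler_pdivrMl // -step_avgZ.
apply: le_trans (HM K); rewrite -[X in X <= _]add0r; apply: lerD.
  by rewrite invr_ge0 ltW ?qtot_gt0.
by apply: step_avg_le => z; rewrite mulrC steps_le.
Qed.

(* Null recurrence: under bounded jump rates, an escape function V with
   Pj V o > 0 makes P_o(tau_o > k + 1) at least of order 1 / (k + 1), whose
   sum (the mean number of jumps of a return) diverges like the harmonic
   series. *)
Lemma not_pos_recurrent_of_escape (V : state I -> R) (W Q : R) (o : state I) :
  V o = 0 -> (forall y, V y <= Pj V y) -> (forall y i, V (Defs.up y i) <= V y + W) ->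
  (forall y i, V (Defs.down y i) <= V y) -> 0 <= W -> 0 < Pj V o ->
  (forall x, q x <= Q) -> ~ ctmc_pos_recurrent lam d.
Proof.
move=> V_o V_sub V_up V_down W_ge0 escape q_le pos_rec.
have [M HM] := pos_recurrent_steps_bounded o q_le pos_rec.
apply: (@dvg_harmonic R); apply: nondecreasing_is_cvgn.
  by apply: nondecreasing_series => k _ _; exact: harmonic_ge0.
exists (W / Pj V o * M) => _ [K _ <-]; rewrite /series /=.
apply: le_trans (_ : \sum_(0 <= k < K) W / Pj V o * Pj (survival o k) o <= _).
  apply: ler_sum => k _; have k1_gt0 : (0 : R) < k.+1%:R by rewrite ltr0n.
  rewrite -(@ler_pM2r _ (Pj V o * k.+1%:R)) ?mulr_gt0 //.
  have -> : (k.+1%:R)^-1 * (Pj V o * k.+1%:R) = Pj V o by field; rewrite gt_eqF.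
  have -> : W / Pj V o * Pj (survival o k) o * (Pj V o * k.+1%:R) =
      W * k.+1%:R * Pj (survival o k) o by field; rewrite gt_eqF.
  exact: (escape_le_survival V_o V_sub V_up V_down W_ge0).
by rewrite -mulr_sumr -steps_before_telescope ler_wpM2l ?HM // divr_ge0 // ltW.
Qed.

(* Critical load: if the weighted departure rate never exceeds the weighted
   arrival rate, the linear function V y = sum_i w_i y_i is an escape
   function from the empty state. *)
Lemma not_pos_recurrent_of_critical_load (w : 'I_I -> R) (Q : R) : (forall i, 0 < w i) ->
  (forall x, \sum_i w i * d x i <= \sum_i w i * lam i) -> (forall x, q x <= Q) ->
  ~ ctmc_pos_recurrent lam d.
Proof.
move=> w_gt0 dep_le q_le.
pose o : state I := [ffun => 0%N].
pose V (y : state I) := \sum_i w i * (y i)%:R.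
pose W := \sum_i w i.
have V_up y i : V (Defs.up y i) = V y + w i.
  rewrite /V (eq_bigr (fun k => w k * (y k)%:R + w k * (k == i)%:R)); last first.
    by move=> k _; rewrite ffunE natrD mulrDr.
  rewrite big_split /=; congr (_ + _).
  by rewrite (bigD1 i) //= eqxx mulr1 big1 ?addr0 // => k /negbTE ->; rewrite mulr0.
have V_down y i : V (Defs.down y i) <= V y.
  by apply: ler_sum => k _; rewrite ffunE ler_wpM2l ?ler_nat ?leq_subr // ltW.
have dV_down y i : d y i * V (Defs.down y i) = d y i * (V y - w i).
  have [y0|y_gt0] := posnP (y i); first by rewrite d_empty // !mul0r.
  by have := V_up (Defs.down y i) i; rewrite up_down // => ->; rewrite addrK.
have Pj_V y : Pj V y = V y + (\sum_i (w i * lam i - w i * d y i)) / q y.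
  rewrite /step_avg (eq_bigr (fun i => V y / q y * (lam i + d y i)
     + (w i * lam i - w i * d y i) / q y)); last first.
    by move=> i _; rewrite V_up [d y i / q y * _]mulrAC dV_down; ring.
  by rewrite big_split /= -mulr_sumr -mulr_suml mulfVK // gt_eqF // qtot_gt0.
have V_o : V o = 0 by apply: big1 => i _; rewrite ffunE mulr0.
have d_o i : d o i = 0 by apply: d_empty; rewrite ffunE.
apply: (@not_pos_recurrent_of_escape V W Q o) => //.
- move=> y; rewrite Pj_V lerDl divr_ge0 //; last exact/ltW/qtot_gt0.
  by rewrite sumrB subr_ge0.
- by move=> y i; rewrite V_up lerD2l /W (bigD1 i) //= lerDl sumr_ge0 // => k _; rewrite ltW.
- by apply: sumr_ge0 => k _; rewrite ltW.
rewrite Pj_V V_o add0r divr_gt0 ?qtot_gt0 // (eq_bigr (fun i => w i * lam i)); last first.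
  by move=> i _; rewrite d_o mulr0 subr0.
by rewrite (bigD1 i0) //= ltr_pwDl ?mulr_gt0 // sumr_ge0 // => i _; rewrite mulr_ge0 // ltW.
Qed.
End JumpChain.

Section WorkConserving.
Variables (R : realType) (I J : nat) (E : {set 'I_I * 'I_J}).
Variables (mun : 'I_I -> 'I_J -> R) (Nn : 'I_J -> nat).
Variable (z : state I -> 'I_I -> 'I_J -> nat).
Hypothesis mun_gt0 : forall i j, (i, j) \in E -> 0 < mun i j.
Hypothesis z_wc : wc_policy E Nn z.

Lemma dep_rate_ge0 x i : 0 <= dep_rate E mun z x i.
Proof. by apply: sumr_ge0 => j Hj; rewrite mulr_ge0 // ltW ?mun_gt0. Qed.

Lemma dep_rate_empty (x : state I) i : x i = 0%N -> dep_rate E mun z x i = 0.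
Proof.
move=> x0; apply: big1 => j _; have [_ served _ _] := z_wc x.
have := served i; rewrite x0 leqn0 sum_nat_eq0 => /forallP /(_ j) /implyP /(_ isT) /eqP ->.
by rewrite mulr0.
Qed.

Lemma qtot_dep_rate_le (lam : 'I_I -> R) x :
  qtot lam (dep_rate E mun z) x <= \sum_i (lam i + \sum_(j | (i, j) \in E) mun i j * (Nn j)%:R).
Proof.
apply: ler_sum => i _; rewrite lerD2l; apply: ler_sum => j Hj.
rewrite ler_wpM2l ?ler_nat ?(ltW (mun_gt0 Hj)) //.
have [_ _ pools _] := z_wc x.
by apply: leq_trans (pools j); rewrite (bigD1 i) //= leq_addr.
Qed.

Lemma weighted_dep_rate_le (w : 'I_I -> R) (u : 'I_J -> R) :
  (forall j, 0 <= u j) -> (forall i j, (i, j) \in E -> w i * mun i j = u j) ->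
  forall x, \sum_i w i * dep_rate E mun z x i <= \sum_j u j * (Nn j)%:R.
Proof.
move=> u_ge0 wu x.
have -> : \sum_i w i * dep_rate E mun z x i =
    \sum_j \sum_i (if (i, j) \in E then u j * (z x i j)%:R else 0).
  rewrite exchange_big; apply: eq_bigr => i _.
  rewrite /dep_rate mulr_sumr big_mkcond; apply: eq_bigr => j _.
  by case: ifP => Hij; rewrite ?mulr0 // mulrA wu.
apply: ler_sum => j _; apply: le_trans (_ : \sum_i u j * (z x i j)%:R <= _).
  by apply: ler_sum => i _; case: ifP => _; rewrite ?mulr_ge0.
rewrite -mulr_sumr ler_wpM2l // -natr_sum ler_nat; by case: (z_wc x).
Qed.
End WorkConserving.

Theorem theorem6 (R : realType) (I J : nat) (E : {set 'I_I * 'I_J})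
  (lam : nat -> 'I_I -> R) (mu : nat -> 'I_I -> 'I_J -> R) (N : nat -> 'I_J -> nat)
  (lamL : 'I_I -> R) (nuL : 'I_J -> R) (muL : 'I_I -> 'I_J -> R)
  (xi : 'I_I -> 'I_J -> R) (n : nat) (p : 'I_I -> R) :
  is_tree E ->
  (forall m i, 0 < lam m i) ->
  (forall m i j, (i, j) \in E -> 0 < mu m i j) ->
  (forall m j, (0 < N m j)%N) ->
  (forall i, 0 < lamL i) -> (forall j, 0 < nuL j) ->
  (forall i j, (i, j) \in E -> 0 < muL i j) ->
  (forall i, (fun m => lam m i / m%:R) @ \oo --> lamL i) ->
  (forall j, (fun m => (N m j)%:R / m%:R) @ \oo --> nuL j) ->
  (forall i j, (i, j) \in E -> (fun m => mu m i j) @ \oo --> muL i j) ->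
  (forall i, cvg ((fun m => lamhat lam lamL m i) @ \oo)) ->
  (forall i j, (i, j) \in E -> cvg ((fun m => muhat mu muL m i j) @ \oo)) ->
  (forall j, cvg ((fun m => nuhat N nuL m j) @ \oo)) ->
  CRP E lamL muL nuL xi ->
  (0 < n)%N ->
  (forall i, 0 < p i) -> \sum_(i < I) p i = 1 ->
  forall v : R,
    is_vartheta E (lamhat lam lamL n) (mu n) (thetan E mu muL N nuL xi n) p v ->
    (v < 0 ->
       forall z, wc_policy E (N n) z ->
         ctmc_transient (lam n) (dep_rate E (mu n) z)) /\
    (v = 0 ->
       forall z, wc_policy E (N n) z ->
         ~ ctmc_pos_recurrent (lam n) (dep_rate E (mu n) z)).
Proof.
move=> tree lam_gt0 mu_gt0 _ _ _ _ _ _ _ _ _ _ crp n_gt0 p_gt0 p_sum v v_opt.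
have [I0|I_gt0] := posnP I.
  by subst I; move: p_sum; rewrite big_ord0 => /eqP; rewrite eq_sym oner_eq0.
pose i0 : 'I_I := Ordinal I_gt0.
have [w [u [w_gt0 u_gt0 wu]]] := tree_node_weights i0 tree (mu_gt0 n).
have [D D_gt0 cap] :=
  capacity_le_arrivals i0 tree.1 (mu_gt0 n) crp n_gt0 p_gt0 w_gt0 u_gt0 wu v_opt.
have dep_le z (z_wc : wc_policy E (N n) z) :=
  weighted_dep_rate_le z_wc (fun j => ltW (u_gt0 j)) wu.
split=> [v_lt0 | v0] z z_wc.
- have overload : \sum_j u j * (N n j)%:R < \sum_i w i * lam n i.
    by apply: le_lt_trans cap _; rewrite gtrDl pmulr_llt0.
  exact: (transient_of_overload (lam_gt0 n) (dep_rate_ge0 z (mu_gt0 n))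
    (dep_rate_empty (mu n) z_wc) i0 w_gt0 (dep_le z z_wc) overload).
- rewrite v0 mul0r addr0 in cap.
  apply: (not_pos_recurrent_of_critical_load (lam_gt0 n) (dep_rate_ge0 z (mu_gt0 n))
    (dep_rate_empty (mu n) z_wc) i0 w_gt0 _ (qtot_dep_rate_le (mu_gt0 n) z_wc (lam n))).
  by move=> x; apply: le_trans (dep_le z z_wc x) cap.
Qed.
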